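(* Let $p$ be a prime and $G$ a finite $p$-group of maximal class which has an abelian maximal subgroup. Then every non-abelian subgroup $H$ of $G$ satisfies $C_G(H)\le H$.
   Context: A group of order $p^n$ ($n\ge 2$) has maximal class if its nilpotency class is $n-1$. $C_G(H)$ denotes the centralizer of $H$ in $G$. *)

From mathcomp Require Import all_boot all_fingroup all_solvable.
Set Implicit Arguments. Unset Strict Implicit. Unset Printing Implicit Defensive.
Local Open Scope group_scope.

Definition maximal_class (gT : finGroupType) (p : nat) (G : {set gT}) : Prop :=
  exists n : nat, (2 <= n)%N /\ #|G| = (p ^ n)%N /\ nil_class G = n.-1.

From mathcomp Require Import all_boot all_fingroup all_solvable.
From mathcomp Require Import zify.
Set Implicit Arguments. Unset Strict Implicit. Unset Printing Implicit Defensive.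
Local Open Scope group_scope.

(* Fix an abelian maximal subgroup M of G.  An element h outside M centralizes
   M * <[h]> = G as soon as it commutes with an element of M, so 'C_M[h] is
   central and 'C_G[h] = 'C_M[h] * <[h]> is abelian.  A nonabelian H <= G must
   therefore have 'Z(H) <= M (a central z of H outside M would make H <= 'C_G[z]
   abelian), hence 'Z(H) <= 'C_M[h] <= 'Z(G) for any h in H outside M.  In
   maximal class the centre has order p, so 'Z(G) = 'Z(H) <= H, and finally
   'C_G(H) <= 'C_G[h] = 'C_M[h] * <[h]> <= 'Z(G) * <[h]> <= H. *)

Lemma maximal_class_nil_class (gT : finGroupType) (p : nat) (G : {group gT}) :
  prime p -> maximal_class p G -> nil_class G = (logn p #|G|).-1.
Proof. by move=> p_pr [n [_ [-> ->]]]; rewrite pfactorK. Qed.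

Lemma logn_center_factor_gt1 (gT : finGroupType) (p : nat) (G : {group gT}) :
  prime p -> p.-group G -> ~~ abelian G -> 1 < logn p #|G / 'Z(G)|.
Proof.
move=> p_pr pG not_cGG; rewrite ltnNge; apply: contra not_cGG => le_log1.
apply: cyclic_center_factor_abelian; rewrite (dvdn_prime_cyclic p_pr) //.
by rewrite (card_pgroup (quotient_pgroup _ pG)) (dvdn_exp2l _ le_log1).
Qed.

Lemma logn_card_center_factor (gT : finGroupType) (p : nat) (G : {group gT}) :
  logn p #|G| = logn p #|'Z(G)| + logn p #|G / 'Z(G)|.
Proof.
rewrite card_quotient ?normal_norm ?center_normal // -lognM ?cardG_gt0 //.
by rewrite Lagrange ?center_sub.
Qed.

(* The bound on the class of G / 'Z(G) leaves room for only one factor p in 'Z(G). *)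
Lemma card_center_maximal_class (gT : finGroupType) (p : nat) (G : {group gT}) :
  prime p -> p.-group G -> maximal_class p G -> ~~ abelian G -> #|'Z(G)| = p.
Proof.
move=> p_pr pG mcG not_cGG.
have nilG := pgroup_nil pG.
have ntZ : 'Z(G) != 1.
  by rewrite center_nil_eq1 //; apply: contraNneq not_cGG => ->; apply: abelian1.
have [_ _ [k oZ]] := pgroup_pdiv (pgroupS (center_sub G) pG) ntZ.
have gt1_quo := logn_center_factor_gt1 p_pr pG not_cGG.
have class_quo : (logn p #|G|).-1.-1 <= maxn 1 (logn p #|G / 'Z(G)|).-1.
  rewrite -(maximal_class_nil_class p_pr mcG) -nil_class_quotient_center //.
  exact: nil_class_pgroup (quotient_pgroup _ pG).
rewrite logn_card_center_factor oZ pfactorK // in class_quo.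
by rewrite oZ; have -> : k = 0%N by lia.
Qed.

Section AbelianMaximalSubgroup.

Variables (gT : finGroupType) (G M : {group gT}).
Hypotheses (nsMG : M <| G) (maxM : maximal M G) (cMM : abelian M).

Section OutsideElement.

Variable h : gT.
Hypotheses (hG : h \in G) (notMh : h \notin M).

Lemma mul_cycle_maximal : M * <[h]> = G.
Proof.
by apply: mulg_normal_maximal nsMG maxM _ _; rewrite cycle_subG.
Qed.

Lemma cent1_outside_maximalE : 'C_G[h] = 'C_M[h] * <[h]>.
Proof.
rewrite -{1}mul_cycle_maximal setIC -group_modr ?cycle_subG ?cent1id //.
by rewrite setIC.
Qed.

Lemma cent1_maximal_sub_center : 'C_M[h] \subset 'Z(G).
Proof.
apply/subsetP => x /setIP[Mx cxh].
rewrite inE (subsetP (normal_sub nsMG)) //= -mul_cycle_maximal centM inE cent_cycle cxh.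
by rewrite andbT (subsetP cMM).
Qed.

Lemma abelian_cent1_outside_maximal : abelian 'C_G[h].
Proof.
rewrite cent1_outside_maximalE abelianM cycle_abelian (abelianS (subsetIl _ _)) //.
by rewrite centsC cent_cycle subsetIr.
Qed.

End OutsideElement.

Lemma center_nonabelian_sub_maximal (H : {group gT}) :
  H \subset G -> ~~ abelian H -> 'Z(H) \subset M.
Proof.
move=> sHG not_cHH; apply/subsetP => z Zz; apply: contraR not_cHH => notMz.
have [Hz cHz] := setIP Zz.
apply: abelianS (abelian_cent1_outside_maximal (subsetP sHG z Hz) notMz).
by rewrite subsetI sHG sub_cent1.
Qed.

Lemma center_nonabelian_sub_center (H : {group gT}) (h : gT) :
  H \subset G -> ~~ abelian H -> h \in H -> h \notin M -> 'Z(H) \subset 'Z(G).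
Proof.
move=> sHG not_cHH Hh notMh.
apply: subset_trans (cent1_maximal_sub_center (subsetP sHG h Hh) notMh).
rewrite subsetI center_nonabelian_sub_maximal // sub_cent1.
by rewrite (subsetP _ h Hh) // centsC subsetIr.
Qed.

End AbelianMaximalSubgroup.

Theorem lemma6p11 (gT : finGroupType) (p : nat) (G : {group gT}) :
  prime p -> p.-group G -> maximal_class p G ->
  (exists M : {group gT}, maximal M G /\ abelian M) ->
  forall H : {group gT}, H \subset G -> ~~ abelian H -> 'C_G(H) \subset H.
Proof.
move=> p_pr pG mcG [M [maxM cMM]] H sHG not_cHH.
have [h Hh notMh] : exists2 h, h \in H & h \notin M.
  by apply/subsetPn; apply: contra not_cHH => /abelianS; apply.
have hG := subsetP sHG h Hh.
have nsMG := p_maximal_normal pG maxM.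
have sZHZG := center_nonabelian_sub_center nsMG maxM cMM sHG not_cHH Hh notMh.
have ntZH : #|'Z(H)| != 1%N.
  rewrite -trivg_card1 center_nil_eq1 ?(pgroup_nil (pgroupS sHG pG)) //.
  by apply: contraNneq not_cHH => ->; apply: abelian1.
have oZG := card_center_maximal_class p_pr pG mcG (contra (abelianS sHG) not_cHH).
have sZGH : 'Z(G) \subset H.
  have oZH : #|'Z(H)| = p.
    by apply/(prime_nt_dvdP p_pr ntZH); rewrite (dvdn_trans (cardSg sZHZG)) ?oZG.
  have <- : 'Z(H) = 'Z(G) by apply/eqP; rewrite eqEcard sZHZG oZG oZH leqnn.
  exact: center_sub.
apply: subset_trans (_ : 'C_G[h] \subset H).
  by rewrite setIS // -cent_set1 centS ?sub1set.
rewrite (cent1_outside_maximalE nsMG maxM hG notMh) mul_subG ?cycle_subG //.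
exact: subset_trans (cent1_maximal_sub_center nsMG maxM cMM hG notMh) sZGH.
Qed.
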